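(* Let $G$ be a countable group acting weakly mixingly (and preserving the probability measure) on a standard probability space $(X,\mu)$, with action written $x \mapsto g\cdot x$. Let $\mathcal{G}$ be a Polish group admitting a bi-invariant complete metric $d$, and let $K \subset \mathcal{G}$ be a closed subgroup. Suppose that $\gamma : G \times X \rightarrow K$ is a $1$-cocycle, that $v : X \rightarrow \mathcal{G}$ is a measurable map and that $\theta : G \rightarrow \mathcal{G}$ is a group homomorphism such that $$\gamma(g,x) = v(g \cdot x)\, \theta(g)\, v(x)^{-1}$$ for almost every $x \in X$ and every $g\in G$. Then, whenever $v_0 \in \mathcal{G}$ is an essential value of the function $v$, we have $v(x)v_0^{-1} \in K$ for almost every $x \in X$ and $v_0\theta(g)v_0^{-1} \in K$ for all $g \in G$. *)

From HB Require Import structures.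
From mathcomp Require Import all_boot all_order all_algebra.
From mathcomp Require Import all_classical all_reals all_analysis.

Set Implicit Arguments.
Unset Strict Implicit.
Unset Printing Implicit Defensive.

Import Order.TTheory GRing.Theory Num.Theory.
Local Open Scope classical_set_scope.
Local Open Scope ring_scope.

Definition is_metric (R : realType) (T : Type) (d : T -> T -> R) : Prop :=
  [/\ forall x y, 0 <= d x y,
      forall x y, d x y = 0 <-> x = y,
      forall x y, d x y = d y x &
      forall x y z, d x z <= d x y + d y z].

Definition metric_complete (R : realType) (T : Type) (d : T -> T -> R) : Prop :=
  forall u : nat -> T,
    (forall e : R, 0 < e -> exists N : nat, forall m n : nat,
        (N <= m)%N -> (N <= n)%N -> d (u m) (u n) < e) ->
    exists l : T, forall e : R, 0 < e -> exists N : nat, forall n : nat,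
        (N <= n)%N -> d (u n) l < e.

Definition metric_separable (R : realType) (T : Type) (d : T -> T -> R) : Prop :=
  exists D : set T, countable D /\
    forall (x : T) (e : R), 0 < e -> exists y, D y /\ d x y < e.

Definition d_open (R : realType) (T : Type) (d : T -> T -> R) : set (set T) :=
  [set U | forall x, U x -> exists e : R, 0 < e /\ forall y, d x y < e -> U y].

Definition d_closed (R : realType) (T : Type) (d : T -> T -> R) (F : set T) : Prop :=
  d_open d (~` F).

Definition d_borel (R : realType) (T : Type) (d : T -> T -> R) : set (set T) :=
  <<s d_open d >>.

Definition bi_invariant (R : realType) (H : groupType) (d : H -> H -> R) : Prop :=
  forall x y z : H, d (z * x)%g (z * y)%g = d x y /\ d (x * z)%g (y * z)%g = d x y.

(* (𝒢, d): a Polish group admitting the bi-invariant complete metric d,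
   i.e. d is a complete, separable, bi-invariant metric inducing the topology
   (group operations are then automatically continuous). *)
Definition polish_biinv_metric (R : realType) (H : groupType) (d : H -> H -> R) : Prop :=
  [/\ is_metric d, metric_complete d, metric_separable d & bi_invariant d].

Definition is_subgroup (H : groupType) (K : set H) : Prop :=
  [/\ K 1%g,
      forall x y, K x -> K y -> K (x * y)%g &
      forall x, K x -> K (x^-1)%g].

Definition group_hom (G H : groupType) (f : G -> H) : Prop :=
  forall g h : G, f (g * h)%g = (f g * f h)%g.

(* Standard Borel space: Borel isomorphic to a Borel subset of R
   (Kuratowski: equivalent to being Borel isomorphic to a Borel subset
   of a Polish space). *)
Definition standard_borel (d : measure_display) (X : measurableType d)
    (R : realType) : Prop :=
  exists f : X -> R,
    [/\ injective f,
        measurable_fun setT f,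
        measurable (range f) &
        forall A : set X, measurable A -> measurable (f @` A)].

Definition pmp_action (G : groupType) (d : measure_display) (X : measurableType d)
    (R : realType) (mu : probability X R) (a : G -> X -> X) : Prop :=
  [/\ forall x, a 1%g x = x,
      forall g h x, a (g * h)%g x = a g (a h x),
      forall g, measurable_fun setT (a g) &
      forall g A, measurable A -> mu (a g @^-1` A) = mu A].

Definition weakly_mixing (G : groupType) (d : measure_display) (X : measurableType d)
    (R : realType) (mu : probability X R) (a : G -> X -> X) : Prop :=
  forall F : seq (set X), (forall A, A \in F -> measurable A) ->
  forall e : R, 0 < e -> exists g : G, forall A B, A \in F -> B \in F ->
    (`| mu (A `&` a g @^-1` B) - mu A * mu B | < e%:E)%E.

Definition d_measurable (d0 : measure_display) (X : measurableType d0)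
    (R : realType) (H : Type) (d : H -> H -> R) (f : X -> H) : Prop :=
  forall B : set H, d_borel d B -> measurable (f @^-1` B).

Definition cocycle (G : groupType) (d0 : measure_display) (X : measurableType d0)
    (R : realType) (mu : probability X R) (a : G -> X -> X)
    (H : groupType) (d : H -> H -> R) (K : set H) (gamma : G -> X -> H) : Prop :=
  [/\ forall g x, K (gamma g x),
      forall g, d_measurable d (gamma g) &
      forall g h : G, {ae mu, forall x, gamma (g * h)%g x = (gamma g (a h x) * gamma h x)%g}].

Definition essential_value (d0 : measure_display) (X : measurableType d0)
    (R : realType) (mu : probability X R) (H : Type) (d : H -> H -> R)
    (v : X -> H) (v0 : H) : Prop :=
  forall e : R, 0 < e -> (0 < mu [set x | (d (v x) v0 < e)%R])%E.

(* Fix r > 0 and let B be the set of x with d (v x) v0 < r/3; it is non-null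
   because v0 is an essential value.  If the set of x with v x * v0^-1 at
   distance >= r from K were non-null, weak mixing would give g such that it
   meets g^-1 B, and B meets g^-1 B, in non-null sets.  For x and y in these
   sets, gamma g x ^-1 * gamma g y lies in K, and bi-invariance of d together
   with the coboundary equation places it within r of v x * v0^-1.  As K is
   closed, v x * v0^-1 is in K almost everywhere, and then
   v0 * theta g * v0^-1 = (v (g x) * v0^-1)^-1 * gamma g x * (v x * v0^-1)
   for a typical x. *)

From HB Require Import structures.
From mathcomp Require Import all_boot all_order all_algebra.
From mathcomp Require Import all_classical all_reals all_analysis.
From mathcomp Require Import lra.

Set Implicit Arguments.
Unset Strict Implicit.
Unset Printing Implicit Defensive.

Import Order.TTheory GRing.Theory Num.Theory.
Local Open Scope classical_set_scope.
Local Open Scope ring_scope.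

Section ae_lemmas.
Context d0 (X : measurableType d0) (R : realType).
Variable mu : {measure set X -> \bar R}.

Lemma ae_exists_in (P : set X) (Q : X -> Prop) :
  measurable P -> (0 < mu P)%E -> {ae mu, forall x, Q x} -> exists2 x, P x & Q x.
Proof.
move=> mP muP_gt0 aeQ; apply: contrapT => noPQ.
have : mu.-negligible P.
  by apply: negligibleS aeQ => x Px Qx; apply: noPQ; exists x.
by move/(negligibleP _ mP) => muP0; rewrite muP0 ltxx in muP_gt0.
Qed.

Lemma ae_comp_measure_preserving (f : X -> X) (Q : X -> Prop) :
  measurable_fun setT f -> (forall A, measurable A -> mu (f @^-1` A) = mu A) ->
  {ae mu, forall x, Q x} -> {ae mu, forall x, Q (f x)}.
Proof.
move=> mf fmu [N [mN N0 QN]]; exists (f @^-1` N); split.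
- by rewrite -[_ @^-1` _]setTI; exact: mf.
- by rewrite fmu.
- by move=> x /= nQfx; apply: QN.
Qed.

End ae_lemmas.

Definition d_nbhs (R : realType) (T : Type) (d : T -> T -> R) (K : set T) (r : R) :
    set T :=
  [set y | exists2 k, K k & d y k < r].

Section metric_topology.
Context (R : realType) (T : Type) (d : T -> T -> R).
Hypothesis hd : is_metric d.

Let dist_triangle_sym x y z : d x z <= d y x + d y z.
Proof. by have [_ _ dC dtri] := hd; rewrite -(dC x y); exact: dtri. Qed.

Lemma d_open_ball (c : T) (r : R) : d_open d [set y | d y c < r].
Proof.
move=> x /= dxc; exists (r - d x c); split=> [|y dxy /=]; first lra.
by have := dist_triangle_sym y x c; lra.
Qed.

Lemma d_open_nbhs (K : set T) (r : R) : d_open d (d_nbhs d K r).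
Proof.
move=> x [k Kk dxk]; exists (r - d x k); split=> [|y dxy]; first lra.
by exists k => //; have := dist_triangle_sym y x k; lra.
Qed.

Lemma d_closed_bigcap_nbhs (K : set T) :
  d_closed d K -> \bigcap_n d_nbhs d K n.+1%:R^-1 `<=` K.
Proof.
move=> clK x Kx; apply: contrapT => nKx.
have [e [e_gt0 ball_nK]] := clK x nKx.
have [k Kk dxk] := Kx (Num.bound e^-1) I.
apply: ball_nK Kk; apply: (lt_trans dxk).
rewrite invf_plt ?posrE ?ltr0Sn //.
apply: (lt_le_trans (archi_boundP _)); first by rewrite invr_ge0 ltW.
by rewrite ler_nat.
Qed.

End metric_topology.

Lemma d_open_preimage (R : realType) (T T' : Type) (d : T -> T -> R)
    (d' : T' -> T' -> R) (f : T -> T') (U : set T') :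
  d_open d' U -> (forall x y, d' (f x) (f y) <= d x y) -> d_open d (f @^-1` U).
Proof.
move=> openU f_lip x Ufx; have [e [e_gt0 ballU]] := openU _ Ufx.
by exists e; split=> // y dxy; apply: ballU; apply: le_lt_trans dxy.
Qed.

Lemma d_measurable_open d0 (X : measurableType d0) (R : realType) (T : Type)
    (d : T -> T -> R) (v : X -> T) (U : set T) :
  d_measurable d v -> d_open d U -> measurable (v @^-1` U).
Proof. by move=> mv openU; apply: mv; exact: sub_sigma_algebra. Qed.

Section biinvariant_metric.
Context (R : realType) (H : groupType) (d : H -> H -> R).
Hypotheses (hd : is_metric d) (hbi : bi_invariant d).

Let distmul2l x y z : d (z * x)%g (z * y)%g = d x y := (hbi x y z).1.
Let distmul2r x y z : d (x * z)%g (y * z)%g = d x y := (hbi x y z).2.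

Lemma dist_invg x y : d x^-1%g y^-1%g = d x y.
Proof.
have [_ _ dC _] := hd.
by rewrite -(distmul2l _ _ x) mulgV -(distmul2r _ _ y) mul1g mulgVK dC.
Qed.

Lemma dist_conjg x y z : d (z^-1 * x * z)%g (z^-1 * y * z)%g = d x y.
Proof. by rewrite distmul2r distmul2l. Qed.

(* With wx = v (g x), wy = v (g y), t = theta g, the second argument is
   gamma g x ^-1 * gamma g y. *)
Lemma dist_coboundary_le (vx vy wx wy t v0 : H) :
  d (vx * v0^-1)%g ((wx * t * vx^-1)^-1 * (wy * t * vy^-1))%g <= d vy v0 + d wx wy.
Proof.
have [_ _ dC dtri] := hd.
have -> : ((wx * t * vx^-1)^-1 * (wy * t * vy^-1) =
           vx * (t^-1 * (wx^-1 * wy) * t) * vy^-1)%g.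
  by rewrite !invgM !invgK !mulgA.
apply: le_trans (dtri _ (vx * vy^-1)%g _) _; apply: lerD.
  by rewrite distmul2l dist_invg dC.
rewrite distmul2r -{1}[vx]mulg1 distmul2l.
have -> : 1%g = (t^-1 * 1 * t)%g by rewrite mulg1 mulVg.
by rewrite dist_conjg -(mulVg wx) distmul2l.
Qed.

End biinvariant_metric.

Lemma weakly_mixing_meet (G : groupType) d0 (X : measurableType d0) (R : realType)
    (mu : probability X R) (a : G -> X -> X) (A B : set X) :
  weakly_mixing mu a -> measurable A -> measurable B ->
  (0 < mu A)%E -> (0 < mu B)%E ->
  exists g, (0 < mu (A `&` a g @^-1` B))%E /\ (0 < mu (B `&` a g @^-1` B))%E.
Proof.
move=> wm mA mB muA_gt0 muB_gt0.
have muE C : measurable C -> mu C = (fine (mu C))%:E.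
  by move=> mC; rewrite fineK ?fin_num_measure.
set pB := fine (mu B).
have pA_gt0 : 0 < fine (mu A) by rewrite -lte_fin -muE.
have pB_gt0 : 0 < pB by rewrite -lte_fin -muE.
pose e := Num.min (fine (mu A) * pB) (pB * pB).
have e_gt0 : 0 < e by rewrite lt_min !mulr_gt0.
have mF C : C \in [:: A; B] -> measurable C by rewrite !inE => /orP[]/eqP->.
have [g mixg] := wm [:: A; B] mF e e_gt0.
have BF : B \in [:: A; B] by rewrite !inE eqxx orbT.
have meet_gt0 C : C \in [:: A; B] -> e <= fine (mu C) * pB ->
    (0 < mu (C `&` a g @^-1` B))%E.
  move=> CF le_e; rewrite lt0e measure_ge0 andbT; apply/eqP => meet0.
  have := mixg C B CF BF; rewrite meet0 sub0e abseN (muE C (mF C CF)) (muE B mB).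
  rewrite -EFinM abse_EFin lte_fin -/pB ger0_norm.
    by move=> /lt_le_trans/(_ le_e); rewrite ltxx.
  exact: mulr_ge0 (fine_ge0 (measure_ge0 _ _)) (ltW pB_gt0).
exists g; split; apply: meet_gt0; rewrite ?inE ?eqxx ?orbT //.
- by rewrite ge_min lexx.
- by rewrite ge_min lexx orbT.
Qed.

Section essential_value.
Context (R : realType) (G : groupType) d0 (X : measurableType d0).
Context (mu : probability X R) (a : G -> X -> X).
Context (H : groupType) (d : H -> H -> R) (K : set H).
Context (gamma : G -> X -> H) (v : X -> H) (theta : G -> H) (v0 : H).
Hypotheses (ha : pmp_action mu a) (hwm : weakly_mixing mu a).
Hypotheses (hdm : is_metric d) (hbi : bi_invariant d).
Hypotheses (hK : is_subgroup K) (hKcl : d_closed d K).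
Hypotheses (gammaK : forall g x, K (gamma g x)) (hv : d_measurable d v).
Hypothesis heq : forall g : G,
  {ae mu, forall x, gamma g x = (v (a g x) * theta g * (v x)^-1)%g}.
Hypothesis hv0 : essential_value mu d v v0.

Let measurable_preimage_act g (A : set X) : measurable A -> measurable (a g @^-1` A).
Proof. by have [_ _ ma _] := ha; move=> mA; rewrite -[_ @^-1` _]setTI; exact: ma. Qed.

Lemma measurable_nbhs_divg r :
  measurable [set x | d_nbhs d K r (v x * v0^-1)%g].
Proof.
apply: (d_measurable_open (U := (fun h => h * v0^-1)%g @^-1` d_nbhs d K r) hv).
have translate_le x y : d (x * v0^-1)%g (y * v0^-1)%g <= d x y.
  by rewrite (hbi x y _).2.
exact: d_open_preimage (d_open_nbhs hdm (K := K) (r := r)) translate_le.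
Qed.

Lemma ae_nbhs_divg r : 0 < r -> {ae mu, forall x, d_nbhs d K r (v x * v0^-1)%g}.
Proof.
move=> r_gt0; have [_ _ dC dtri] := hdm; have [_ KM KV] := hK.
set A := ~` [set x | d_nbhs d K r (v x * v0^-1)%g].
have mA : measurable A by exact/measurableC/measurable_nbhs_divg.
apply/(negligibleP _ mA)/eqP; rewrite eq_le measure_ge0 andbT leNgt.
apply/negP => muA_gt0.
have r3_gt0 : 0 < r / 3 by rewrite divr_gt0.
set B := [set x | d (v x) v0 < r / 3].
have mB : measurable B := d_measurable_open hv (d_open_ball hdm (c := v0) (r := r / 3)).
have [g [meetA meetB]] := weakly_mixing_meet hwm mA mB muA_gt0 (hv0 r3_gt0).
have mgB := measurable_preimage_act g mB.
have [x [Ax Bgx] eqx] := ae_exists_in (measurableI _ _ mA mgB) meetA (heq g).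
have [y [By Bgy] eqy] := ae_exists_in (measurableI _ _ mB mgB) meetB (heq g).
apply: Ax; exists ((gamma g x)^-1 * gamma g y)%g; first by apply: KM; [apply: KV|].
rewrite eqx eqy; apply: le_lt_trans (dist_coboundary_le hdm hbi _ _ _ _ _ _) _.
have := dtri (v (a g x)) v0 (v (a g y)); rewrite (dC v0).
by rewrite /B /= in By Bgx Bgy; lra.
Qed.

Lemma ae_divg_mem : {ae mu, forall x, K (v x * v0^-1)%g}.
Proof.
have nbhs_n n : {ae mu, forall x, d_nbhs d K n.+1%:R^-1 (v x * v0^-1)%g}.
  by apply: ae_nbhs_divg; rewrite invr_gt0 ltr0Sn.
apply: filterS (ae_foralln nbhs_n) => x nbhs_x.
by apply: (d_closed_bigcap_nbhs hKcl) => n _; exact: nbhs_x.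
Qed.

Lemma conjg_hom_mem g : K (v0 * theta g * v0^-1)%g.
Proof.
have [_ KM KV] := hK; have [_ _ ma mu_pres] := ha.
have Kv := ae_divg_mem.
have Kvg := ae_comp_measure_preserving (ma g) (mu_pres g) Kv.
have : {ae mu, forall x, [/\ K (v x * v0^-1)%g, K (v (a g x) * v0^-1)%g &
    gamma g x = (v (a g x) * theta g * (v x)^-1)%g]}.
  by apply: filterS3 Kv Kvg (heq g) => x; split.
have muT_gt0 : (0 < mu setT)%E by rewrite probability_setT lte01.
case/(ae_exists_in measurableT muT_gt0) => x _ [Kx Kgx eqx].
have -> : (v0 * theta g * v0^-1 =
           (v (a g x) * v0^-1)^-1 * gamma g x * (v x * v0^-1))%g.
  by rewrite eqx !invgM !invgK !mulgA !mulgVK.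
by apply: KM (KM _ _ (KV _ Kgx) (gammaK g x)) Kx.
Qed.

End essential_value.

Theorem lemma4p8 (R : realType)
  (G : groupType) (hGcount : countable [set: G])
  (d0 : measure_display) (X : measurableType d0) (hXstd : standard_borel X R)
  (mu : probability X R) (a : G -> X -> X)
  (ha : pmp_action mu a) (hwm : weakly_mixing mu a)
  (H : groupType) (d : H -> H -> R) (hd : polish_biinv_metric d)
  (K : set H) (hKsub : is_subgroup K) (hKcl : d_closed d K)
  (gamma : G -> X -> H) (hgamma : cocycle mu a d K gamma)
  (v : X -> H) (hv : d_measurable d v)
  (theta : G -> H) (htheta : group_hom theta)
  (heq : forall g : G,
      {ae mu, forall x, gamma g x = (v (a g x) * theta g * (v x)^-1)%g})
  (v0 : H) (hv0 : essential_value mu d v v0) :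
  {ae mu, forall x, K (v x * v0^-1)%g} /\
  (forall g : G, K (v0 * theta g * v0^-1)%g).
Proof.
have [hdm _ _ hbi] := hd; have [gammaK _ _] := hgamma.
split=> [|g].
  exact: ae_divg_mem ha hwm hdm hbi hKsub hKcl gammaK hv heq hv0.
exact: conjg_hom_mem ha hwm hdm hbi hKsub hKcl gammaK hv heq hv0 g.
Qed.
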